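(* Consider an instance of restricted assignment with interval restrictions in which every job has a nonempty eligible interval, with machines identified with $\{0,\dots,m-1\}$ in their order and $\mathcal{M}(j)=\{\ell(j),\dots,r(j)\}$. Let $\mathrm{OPT}$ be the optimal makespan and let $$L=\max\Big\{\max_{j\in\mathcal{J}}p_j,\ \max_{0\le \ell\le r\le m-1}\frac{p(\mathcal{J}(\ell,r))}{r-\ell+1}\Big\},$$ where $\mathcal{J}(\ell,r)=\{j\in\mathcal{J}: \mathcal{M}(j)\subseteq\{\ell,\dots,r\}\}$ and $p(J)=\sum_{j\in J}p_j$. Consider the least flexible first heuristic: starting with machine $i^*=0$, repeatedly do the following: let $J$ be the set of not yet placed jobs eligible on $i^*$; if the load currently placed on $i^*$ is at most $L$ and $J\neq\emptyset$, place on $i^*$ a job $j\in J$ with minimal $r(j)$ and consider $i^*$ again; otherwise move to the next machine $i^*+1$, or stop if there is none. Then this heuristic places every job, and every machine receives a load of at most $L+\max_{j\in\mathcal{J}}p_j\le 2\,\mathrm{OPT}$.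
   Context: Restricted assignment with interval restrictions: jobs $\mathcal{J}$ with sizes $p_j\ge0$, machines $\{0,\dots,m-1\}$ in a fixed order, each job $j$ eligible exactly on the consecutive machines $\{\ell(j),\dots,r(j)\}$; a schedule assigns each job to an eligible machine, the load of a machine is the total size of jobs assigned to it, and the makespan is the maximum load; $\mathrm{OPT}$ is the minimum makespan over all schedules. *)

From Stdlib Require Import Relations.
From mathcomp Require Import all_boot all_order all_algebra.
Set Implicit Arguments. Unset Strict Implicit. Unset Printing Implicit Defensive.
Import Order.TTheory GRing.Theory Num.Theory.
Local Open Scope ring_scope.

Section Instance.
Variables (R : realFieldType) (n m : nat) (p : 'I_n -> R) (ell r : 'I_n -> nat).
(* Jobs are 'I_n, machines are 0..m-1, job j is eligible on {ell j,...,r j}. *)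

(* max_j p_j  (base 0 is harmless since p >= 0) *)
Definition pmax : R := \big[Num.max/0]_(j < n) p j.

Definition pJ (l rr : nat) : R := \sum_(j < n | (l <= ell j)%N && (r j <= rr)%N) p j.

Definition Lbound : R :=
  Num.max pmax
    (\big[Num.max/0]_(l < m) \big[Num.max/0]_(rr < m | (l <= rr)%N)
        (pJ l rr / ((rr - l + 1)%N)%:R)).

Definition valid_schedule (sigma : 'I_n -> nat) : Prop :=
  forall j, (ell j <= sigma j <= r j)%N.

Definition makespan (sigma : 'I_n -> nat) : R :=
  \big[Num.max/0]_(i < m) \sum_(j < n | sigma j == i :> nat) p j.

Definition is_OPT (o : R) : Prop :=
  (exists2 sigma, valid_schedule sigma & makespan sigma = o) /\
  (forall sigma, valid_schedule sigma -> o <= makespan sigma).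

(* Partial assignment during the heuristic: None = not yet placed. *)
Definition load (a : 'I_n -> option nat) (i : nat) : R :=
  \sum_(j < n | a j == Some i) p j.

Definition eligible_unplaced (a : 'I_n -> option nat) (i : nat) (j : 'I_n) : bool :=
  (a j == None) && (ell j <= i <= r j)%N.

(* States of the least-flexible-first heuristic: (current machine i*, assignment).
   i* = m means the heuristic has stopped. *)
Definition lff_state := (nat * ('I_n -> option nat))%type.

Definition upd (a : 'I_n -> option nat) (j : 'I_n) (i : nat) : 'I_n -> option nat :=
  fun k => if k == j then Some i else a k.

Inductive lff_step : lff_state -> lff_state -> Prop :=
  | lff_place : forall i a j,
      (i < m)%N ->
      load a i <= Lbound ->
      eligible_unplaced a i j ->
      (forall j', eligible_unplaced a i j' -> (r j <= r j')%N) ->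
      lff_step (i, a) (i, upd a j i)
  | lff_move : forall i a,
      (i < m)%N ->
      ~ (load a i <= Lbound /\ exists j, eligible_unplaced a i j) ->
      lff_step (i, a) (i.+1, a).

Definition lff_init : lff_state := (0%N, fun _ => None).

End Instance.

(* In any schedule the jobs of J(l,r) share the r-l+1 machines l..r, which gives
   L <= OPT and max p <= OPT.  The heuristic only adds a job to a machine whose
   load is at most L, so no load exceeds L + max p.  The point is that no job is
   left behind.  Suppose the heuristic leaves machine i while a pending job j0
   has r(j0) = i; then the load of i exceeds L.  Call a machine saturated when
   its load exceeds L and all its jobs end by i, and take the maximal run l..i
   of saturated machines.  Machine l-1 was either left with load at most L, so
   no job still pending was eligible on it, or it carries a job ending after i,
   which least flexible first preferred to every pending job eligible there.
   Either way all jobs on l..i, and j0, lie in J(l,i), hence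
   p(J(l,i)) > (i-l+1) L, contradicting the definition of L. *)

From Stdlib Require Import Relations Wf_nat.
From mathcomp Require Import all_boot all_order all_algebra zify.
Import Order.TTheory GRing.Theory Num.Theory.
Set Implicit Arguments. Unset Strict Implicit.
Local Open Scope ring_scope.

Lemma ler_sum_subpred (R : numDomainType) (I : finType) (P Q : pred I) (F : I -> R) :
  (forall i, 0 <= F i) -> (forall i, P i -> Q i) ->
  \sum_(i | P i) F i <= \sum_(i | Q i) F i.
Proof.
move=> F0 PQ; rewrite big_mkcond [X in _ <= X]big_mkcond; apply: ler_sum => i _.
by case: ifP => [/PQ -> // | _]; case: ifP.
Qed.

Lemma sum_load_nat (R : realFieldType) n (p : 'I_n -> R) a l h :
  \sum_(l <= k < h) load p a k =
  \sum_(j | if a j is Some k then (l <= k < h)%N else false) p j.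
Proof.
rewrite /load; under eq_bigr do rewrite big_mkcond.
rewrite exchange_big [RHS]big_mkcond; apply: eq_bigr => j _.
case: (a j) => [k|] /=; last by rewrite big1.
rewrite -big_mkcond (eq_bigl (fun i => i == k)) ?big_nat1_eq // => i.
by rewrite eq_sym.
Qed.

Section LeastFlexibleFirst.
Variables (R : realFieldType) (n m : nat) (p : 'I_n -> R) (ell r : 'I_n -> nat).
Hypothesis p_ge0 : forall j, 0 <= p j.
Hypothesis interval_ok : forall j, (ell j <= r j)%N /\ (r j < m)%N.

Local Notation L := (Lbound m p ell r).
Local Notation step := (lff_step m p ell r).

Lemma pmax_ge0 : 0 <= pmax p.
Proof. exact: bigmax_ge_id. Qed.

Lemma le_pmax j : p j <= pmax p.
Proof. exact: le_bigmax. Qed.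

Lemma pmax_le_Lbound : pmax p <= L.
Proof. by rewrite /Lbound le_max lexx. Qed.

Lemma pJ_le_Lbound l i : (l <= i < m)%N -> pJ p ell r l i <= L *+ (i.+1 - l).
Proof.
move=> /andP[li im]; have len_gt0 : 0 < ((i - l + 1)%N)%:R :> R by rewrite ltr0n addn1.
have : pJ p ell r l i / ((i - l + 1)%N)%:R <= L.
  rewrite /Lbound le_max; apply/orP; right.
  apply: le_trans (le_bigmax _ _ (Ordinal (leq_ltn_trans li im))).
  exact: (@le_bigmax_cond _ _ _ _ (Ordinal im)).
by rewrite ler_pdivrMr // mulr_natr addn1 subSn.
Qed.

Lemma load_le_makespan sigma k : (k < m)%N ->
  load p (Some \o sigma) k <= makespan m p sigma.
Proof. by move=> km; apply: (le_bigmax _ _ (Ordinal km)). Qed.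

Lemma pmax_le_makespan sigma : valid_schedule ell r sigma ->
  pmax p <= makespan m p sigma.
Proof.
move=> valid; apply: bigmax_le => [|j _]; first exact: bigmax_ge_id.
have sigma_lt : (sigma j < m)%N by have := valid j; have := interval_ok j; lia.
apply: le_trans (load_le_makespan sigma sigma_lt).
by rewrite /load (bigD1 j) //= lerDl sumr_ge0.
Qed.

Lemma pJ_le_makespan sigma l i : valid_schedule ell r sigma -> (i < m)%N ->
  pJ p ell r l i <= makespan m p sigma *+ (i.+1 - l).
Proof.
move=> valid im.
apply: (@le_trans _ _ (\sum_(l <= k < i.+1) load p (Some \o sigma) k)).
  rewrite sum_load_nat; apply: ler_sum_subpred => // j /andP[lj ji] /=.
  by have := valid j; lia.
rewrite -sumr_const_nat; apply: ler_sum_nat => k /andP[_ ki].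
by apply: load_le_makespan; lia.
Qed.

Lemma Lbound_le_makespan sigma : valid_schedule ell r sigma ->
  L <= makespan m p sigma.
Proof.
move=> valid; rewrite /Lbound ge_max pmax_le_makespan //=.
apply: bigmax_le => [|l _]; first exact: bigmax_ge_id.
apply: bigmax_le => [|i li]; first exact: bigmax_ge_id.
rewrite ler_pdivrMr ?ltr0n ?addn1 // mulr_natr -subSn //.
exact: pJ_le_makespan.
Qed.

Definition unplaced_before (l : nat) (a : 'I_n -> option nat) (j : 'I_n) : bool :=
  if a j is Some k then (l <= k)%N else true.

(* The last two fields are what the heuristic remembers about a machine l it
   has left: if l was left with load at most L, no job still pending was
   eligible on it; every job put on l was at most as flexible as each job that
   was still pending and eligible on l. *)
Record lff_inv (i : nat) (a : 'I_n -> option nat) : Prop := {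
  inv_placed : forall j k, a j = Some k -> (ell j <= k <= r j)%N /\ (k <= i)%N;
  inv_load : forall k, load p a k <= L + pmax p;
  inv_pending : forall j, a j = None -> (i <= r j)%N;
  inv_light : forall l, (l < i)%N -> load p a l <= L ->
    forall j, unplaced_before l.+1 a j -> (l < ell j)%N;
  inv_least_flexible : forall l j' j, a j' = Some l -> unplaced_before l.+1 a j ->
    (ell j <= l)%N -> (r j' <= r j)%N
}.

Lemma lff_inv_init : lff_inv 0 (fun _ => None).
Proof.
split=> //= k; rewrite /load big_pred0 //.
by rewrite addr_ge0 ?pmax_ge0 // (le_trans pmax_ge0 pmax_le_Lbound).
Qed.

Lemma load_upd a j0 i k : a j0 = None ->
  load p (upd a j0 i) k = load p a k + (if i == k then p j0 else 0).
Proof.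
move=> a_j0; rewrite /load big_mkcond [in RHS]big_mkcond.
rewrite (bigD1 j0) //= [in RHS](bigD1 j0) //= /upd eqxx a_j0 add0r addrC.
by congr (_ + _); apply: eq_bigr => j /negbTE ->.
Qed.

Lemma lff_inv_place i a j0 : lff_inv i a ->
  eligible_unplaced ell r a i j0 ->
  (forall j, eligible_unplaced ell r a i j -> (r j0 <= r j)%N) ->
  load p a i <= L -> lff_inv i (upd a j0 i).
Proof.
move=> I /andP[/eqP a_j0 /andP[ell_j0 r_j0]] least light.
have unplaced_upd l j : unplaced_before l (upd a j0 i) j -> unplaced_before l a j.
  by rewrite /unplaced_before /upd; case: (j =P j0) => [->|]; rewrite ?a_j0.
split.
- move=> j k; rewrite /upd; case: (j =P j0) => [-> [<-]|_ /(inv_placed I) //]; lia.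
- move=> k; rewrite load_upd //; case: (i =P k) => [<-|_]; last by rewrite addr0 (inv_load I).
  by rewrite lerD ?le_pmax.
- by move=> j; rewrite /upd; case: (j =P j0) => // _ /(inv_pending I).
- move=> l li; rewrite load_upd //; case: (i =P l) => [il|_]; first lia.
  by rewrite addr0 => light_l j /unplaced_upd; apply: (inv_light I).
- move=> l j' j; rewrite /upd.
  case: (j' =P j0) => [-> [<-] | _ a_j' /unplaced_upd]; last exact: (inv_least_flexible I a_j').
  rewrite /unplaced_before; case: (j =P j0) => [_|_]; first lia.
  case a_j: (a j) => [k|] hk ell_j; first by have := inv_placed I a_j; lia.
  by apply: least; rewrite /eligible_unplaced a_j ell_j (inv_pending I).
Qed.

Definition saturated (i : nat) (a : 'I_n -> option nat) (k : nat) : bool :=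
  (L < load p a k) && [forall j, (a j == Some k) ==> (r j <= i)%N].

Lemma unsaturated_separates i a l : lff_inv i a -> (l < i)%N ->
  ~~ saturated i a l ->
  forall j, unplaced_before l.+1 a j -> (r j <= i)%N -> (l < ell j)%N.
Proof.
move=> I li /nandP[light|/forallPn[j' /[!negb_imply] /andP[/eqP a_j' r_j']]] j unpl r_j.
  by rewrite -leNgt in light; apply: (inv_light I).
rewrite ltnNge; apply/negP => ell_j.
by have := inv_least_flexible I a_j' unpl ell_j; lia.
Qed.

Lemma maximal_saturated_run i a : lff_inv i a -> saturated i a i ->
  exists2 l, (l <= i)%N && all (saturated i a) (index_iota l i.+1) &
    forall j, unplaced_before l a j -> (r j <= i)%N -> (l <= ell j)%N.
Proof.
move=> I sat_i.
have run_i : all (saturated i a) (index_iota i i.+1) by rewrite /index_iota subSnn /= sat_i.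
have [l run l_min] :=
  ex_minnP (ex_intro (fun l => all (saturated i a) (index_iota l i.+1)) i run_i).
have li := l_min i run_i; exists l; first by rewrite li.
case: l => // l' in run l_min li *.
have : ~~ all (saturated i a) (index_iota l' i.+1).
  by apply/negP => /l_min; rewrite ltnn.
rewrite /index_iota subSn 1?ltnW //= -/(index_iota l'.+1 i.+1) run andbT.
exact: unsaturated_separates.
Qed.

Lemma saturated_run_load i a l : (l <= i)%N -> all (saturated i a) (index_iota l i.+1) ->
  L *+ (i.+1 - l) < \sum_(l <= k < i.+1) load p a k.
Proof.
move=> li /allP run; rewrite -sumr_const_nat; apply: ltr_sum_nat => // k.
by rewrite -mem_index_iota => /run /andP[].
Qed.

Lemma saturated_run_jobs i a l j0 : lff_inv i a ->
  all (saturated i a) (index_iota l i.+1) ->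
  (forall j, unplaced_before l a j -> (r j <= i)%N -> (l <= ell j)%N) ->
  a j0 = None -> (r j0 <= i)%N ->
  \sum_(l <= k < i.+1) load p a k + p j0 <= pJ p ell r l i.
Proof.
move=> I /allP run inside a_j0 r_j0.
rewrite /pJ (bigD1 j0) /=; last by rewrite inside ?r_j0 // /unplaced_before a_j0.
rewrite [leLHS]addrC lerD2l sum_load_nat; apply: ler_sum_subpred => // j.
case a_j: (a j) => [k|] // k_in.
have /run /andP[_ /forallP /(_ j)] : k \in index_iota l i.+1 by rewrite mem_index_iota.
rewrite a_j eqxx /= => r_j.
rewrite inside ?r_j ?andbT /unplaced_before ?a_j //; last by case/andP: k_in.
by apply/eqP => j_j0; rewrite j_j0 a_j0 in a_j.
Qed.

Lemma lff_move_pending i a : lff_inv i a -> (i < m)%N ->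
  ~ (load p a i <= L /\ exists j, eligible_unplaced ell r a i j) ->
  forall j, a j = None -> (i < r j)%N.
Proof.
move=> I im stuck j0 a_j0; rewrite ltn_neqAle (inv_pending I) // andbT.
apply/eqP => r_j0.
have ell_j0 : (ell j0 <= i)%N by rewrite r_j0; case: (interval_ok j0).
have sat_i : saturated i a i.
  apply/andP; split.
    rewrite ltNge; apply/negP => light; apply: stuck; split => //; exists j0.
    by rewrite /eligible_unplaced a_j0 ell_j0 r_j0 /=.
  apply/forallP => j; apply/implyP => /eqP a_j; rewrite r_j0.
  by apply: (inv_least_flexible I a_j); rewrite /unplaced_before ?a_j0.
have [l /andP[li run] inside] := maximal_saturated_run I sat_i.
have jobs : \sum_(l <= k < i.+1) load p a k <= pJ p ell r l i.
  apply: le_trans (saturated_run_jobs I run inside a_j0 _); last by rewrite -r_j0.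
  by rewrite lerDl.
have bound : pJ p ell r l i <= L *+ (i.+1 - l) by apply: pJ_le_Lbound; rewrite li.
by have := lt_le_trans (saturated_run_load li run) (le_trans jobs bound); rewrite ltxx.
Qed.

Lemma lff_inv_move i a : lff_inv i a -> (i < m)%N ->
  ~ (load p a i <= L /\ exists j, eligible_unplaced ell r a i j) ->
  lff_inv i.+1 a.
Proof.
move=> I im stuck; split => //.
- by move=> j k /(inv_placed I) [? ?]; split; last exact: leqW.
- exact: inv_load I.
- exact: lff_move_pending.
- move=> l; rewrite ltnS leq_eqVlt => /orP[/eqP -> light j | li]; last exact: inv_light I _ li.
  rewrite /unplaced_before; case a_j: (a j) => [k|] => [ik|_].
    by have := inv_placed I a_j; lia.
  rewrite ltnNge; apply/negP => ell_j; apply: stuck; split => //; exists j.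
  by rewrite /eligible_unplaced a_j ell_j (inv_pending I).
- exact: inv_least_flexible I.
Qed.

Lemma lff_inv_step s t : step s t -> lff_inv s.1 s.2 -> lff_inv t.1 t.2.
Proof.
case=> [i a j0 _ light elig least | i a im stuck] I /=.
  exact: lff_inv_place.
exact: lff_inv_move.
Qed.

Lemma lff_inv_reachable s t : clos_refl_trans _ step s t ->
  lff_inv s.1 s.2 -> lff_inv t.1 t.2.
Proof. by elim=> [x y /lff_inv_step | | x y z _ IHxy _ IHyz /IHxy /IHyz]. Qed.

Definition lff_measure (s : lff_state n) : nat :=
  (m - s.1) + #|[pred j | s.2 j == None]|.

Lemma lff_measure_step s t : step s t -> (lff_measure t < lff_measure s)%N.
Proof.
case=> [i a j0 im _ /andP[a_j0 _] _ | i a im _]; rewrite /lff_measure /=; last first.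
  by rewrite ltn_add2r; lia.
rewrite ltn_add2l [X in (_ < X)%N](cardD1 j0) inE a_j0 add1n ltnS.
apply: subset_leq_card; apply/subsetP => j; rewrite !inE /upd.
by case: (j =P j0) => //= _ ->.
Qed.

Lemma lff_acc s : Acc (fun t s => step s t) s.
Proof.
by apply: (well_founded_lt_compat _ lff_measure) => t u /lff_measure_step /ssrnat.ltP.
Qed.

End LeastFlexibleFirst.

Theorem lemma2 (R : realFieldType) (n m : nat) (p : 'I_n -> R)
    (ell r : 'I_n -> nat)
    (p_ge0 : forall j, 0 <= p j)
    (interval_ok : forall j, (ell j <= r j)%N /\ (r j < m)%N) :
  let step := lff_step m p ell r in
  let L := Lbound m p ell r in
  (* the heuristic terminates (every run is finite) *)
  Acc (fun t s => step s t) (lff_init n) /\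
  (* every stopped run has placed every job eligibly, with loads <= L + pmax *)
  (forall s, clos_refl_trans _ step (lff_init n) s -> s.1 = m ->
     (forall j, exists2 i, s.2 j = Some i & (ell j <= i <= r j)%N) /\
     (forall i, (i < m)%N -> load p s.2 i <= L + pmax p)) /\
  (* and L + pmax <= 2 OPT *)
  (forall o, is_OPT m p ell r o -> L + pmax p <= 2 * o).
Proof.
move=> step L; split; first exact: lff_acc.
split=> [s reach stopped | o [[sigma valid <-] _]]; last first.
  rewrite mulr_natl mulr2n lerD //.
    exact: Lbound_le_makespan p_ge0 interval_ok _ valid.
  exact: pmax_le_makespan p_ge0 interval_ok _ valid.
have I := lff_inv_reachable p_ge0 interval_ok reach (lff_inv_init m p ell r).
rewrite stopped in I; split=> [j | i _]; last exact: inv_load I i.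
case a_j: (s.2 j) => [i|]; first by exists i; case: (inv_placed I a_j).
by have := inv_pending I a_j; case: (interval_ok j); lia.
Qed.
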